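(* Consider a finite reward-free MDP with occupancy polytope $\Phi$, let $d_e^\star\in\Phi$ be the occupancy measure of an optimal demonstrator, and let $\mathcal D=\{(d_e^k,\epsilon^k)\}_{k=1}^K$ be a dataset with $d_e^k\in\Phi$, $\epsilon^k\ge0$ and $\mathcal R(\mathcal D)\neq\emptyset$. Then \[ \mathrm{Gap}\big(\mathcal R(\mathcal D),\mathcal R(d_e^\star)\big)\le\min_{(d,\epsilon)\in\mathrm{conv}(\mathcal D)}\big\{\|d-d_e^\star\|_1+\epsilon\big\}, \] where $\mathrm{conv}(\mathcal D)$ is the convex hull of the pairs $(d_e^k,\epsilon^k)$, $k\in[K]$, viewed as points of $\mathbb R^{S\times A}\times\mathbb R$.
   Context: The MDP has finite state set $S$, finite action set $A$, transitions $P(s'\mid s,a)$, initial distribution $\mu_0$, discount $\gamma\in(0,1)$; $M$ is defined by $(Md)(s)=\sum_a d(s,a)-\gamma\sum_{s',a'}P(s\mid s',a')d(s',a')$ and $\Phi=\{d\ge0:Md=(1-\gamma)\mu_0\}$. Rewards are $r\in\Delta(S\times A)$ (probability simplex). $\mathrm{subopt}(r,d):=\max_{\tilde d\in\Phi}r^\top\tilde d-r^\top d$. $\mathcal R(\mathcal D):=\{r\in\Delta(S\times A):\mathrm{subopt}(r,d_e^k)\le\epsilon^k\ \forall k\}$; $\mathcal R(d_e^\star):=\{r\in\Delta(S\times A):\mathrm{subopt}(r,d_e^\star)=0\}$. For a set of rewards $\mathcal R$, $\mathrm{Gap}(\mathcal R,\mathcal R(d_e^\star)):=\max_{r\in\mathcal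 R}\mathrm{subopt}(r,d_e^\star)$. *)

From HB Require Import structures.
From mathcomp Require Import all_boot all_order all_algebra.
From mathcomp Require Import all_classical all_reals.
Set Implicit Arguments. Unset Strict Implicit. Unset Printing Implicit Defensive.
Import Order.TTheory GRing.Theory Num.Theory.
Local Open Scope ring_scope.
Local Open Scope classical_set_scope.

Section MDP.
Variables (R : realType) (S A : finType).

Local Notation vecSA := {ffun S * A -> R}.

(* P s' s a = P(s' | s, a) *)
Definition Mop (gamma : R) (P : S -> S -> A -> R) (d : vecSA) (s : S) : R :=
  \sum_(a : A) d (s, a) - gamma * \sum_(sa : S * A) P s sa.1 sa.2 * d sa.

Definition Phi (gamma : R) (P : S -> S -> A -> R) (mu0 : S -> R) : set vecSA :=
  [set d : vecSA | (forall x, 0 <= d x) /\ forall s, Mop gamma P d s = (1 - gamma) * mu0 s].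

Definition rewards : set vecSA :=
  [set r : vecSA | (forall x, 0 <= r x) /\ \sum_x r x = 1].

Definition dotSA (r d : vecSA) : R := \sum_x r x * d x.

Definition subopt gamma P mu0 (r d : vecSA) : R :=
  sup [set dotSA r d' | d' in Phi gamma P mu0] - dotSA r d.

Definition RD gamma P mu0 (K : nat) (de : 'I_K -> vecSA) (eps : 'I_K -> R) : set vecSA :=
  [set r : vecSA | rewards r /\ forall k, subopt gamma P mu0 r (de k) <= eps k].

Definition Rstar gamma P mu0 (dstar : vecSA) : set vecSA :=
  [set r : vecSA | rewards r /\ subopt gamma P mu0 r dstar = 0].

Definition Gap gamma P mu0 (Rset : set vecSA) (dstar : vecSA) : R :=
  sup [set subopt gamma P mu0 r dstar | r in Rset].

Definition convD (K : nat) (de : 'I_K -> vecSA) (eps : 'I_K -> R) : set (vecSA * R) :=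
  [set p : vecSA * R | exists lam : 'I_K -> R,
      [/\ forall k, 0 <= lam k, \sum_k lam k = 1,
          p.1 = [ffun x => \sum_k lam k * de k x] & p.2 = \sum_k lam k * eps k]].

Definition norm1 (d : vecSA) : R := \sum_x `|d x|.

End MDP.

From Pilot Require Import Defs.
From HB Require Import structures.
From mathcomp Require Import all_boot all_order all_algebra.
From mathcomp Require Import all_classical all_reals lra.
Import Order.TTheory GRing.Theory Num.Theory.
Local Open Scope ring_scope.
Local Open Scope classical_set_scope.

(* For r in R(D), subopt(r, .) is affine in d (the optimum V := sup r.Phi does
   not depend on d), so on a convex combination (d, eps) of the data it is at
   most the same combination of the eps^k.  Moving from d to d_e^star changes
   r.d by at most ||d - d_e^star||_1 because 0 <= r <= 1.  Both steps use only
   that V is some fixed real, so no boundedness of Phi is needed. *)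

Section Gap.
Variables (R : realType) (S A : finType).
Variables (gamma : R) (P : S -> S -> A -> R) (mu0 : S -> R).

Local Notation vecSA := {ffun S * A -> R}.
Local Notation subopt := (subopt gamma P mu0).

Lemma rewards_le1 (r : vecSA) x : rewards r -> r x <= 1.
Proof.
move=> [r_ge0 <-]; rewrite (bigD1 x) //= lerDl.
by apply: sumr_ge0 => y _.
Qed.

Lemma dotSA_convex K (lam : 'I_K -> R) (de : 'I_K -> vecSA) (r : vecSA) :
  dotSA r [ffun x => \sum_k lam k * de k x] = \sum_k lam k * dotSA r (de k).
Proof.
rewrite /dotSA; under eq_bigr do rewrite ffunE big_distrr.
rewrite exchange_big; apply: eq_bigr => k _ /=.
by rewrite big_distrr; apply: eq_bigr => x _; rewrite mulrCA.
Qed.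

Lemma subopt_convex K (lam : 'I_K -> R) (de : 'I_K -> vecSA) (r : vecSA) :
  \sum_k lam k = 1 ->
  subopt r [ffun x => \sum_k lam k * de k x] = \sum_k lam k * subopt r (de k).
Proof.
move=> lam1; rewrite /Defs.subopt dotSA_convex.
under [RHS]eq_bigr do rewrite mulrBr.
by rewrite sumrB -big_distrl /= lam1 mul1r.
Qed.

Lemma dotSA_sub_le_norm1 (r d d' : vecSA) :
  rewards r -> dotSA r d - dotSA r d' <= norm1 [ffun x => d x - d' x].
Proof.
move=> r_rew; rewrite /dotSA /norm1 -sumrB; apply: ler_sum => x _.
rewrite ffunE -mulrBr (le_trans (ler_norm _)) // normrM ger0_norm ?r_rew.1 //.
by rewrite ler_piMl // rewards_le1.
Qed.

Lemma subopt_le_norm1 (r d d' : vecSA) :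
  rewards r -> subopt r d' <= subopt r d + norm1 [ffun x => d x - d' x].
Proof.
move=> /(dotSA_sub_le_norm1 r d d'); rewrite /Defs.subopt; lra.
Qed.

Lemma convD_vertex K (de : 'I_K -> vecSA) (eps : 'I_K -> R) k :
  convD de eps (de k, eps k).
Proof.
have sum_delta (f : 'I_K -> R) : \sum_j (j == k)%:R * f j = f k.
  under eq_bigr do rewrite mulr_natl mulrb.
  by rewrite -big_mkcond big_pred1_eq.
exists (fun j => (j == k)%:R); split.
- by move=> j; rewrite ler0n.
- by under eq_bigr do rewrite -[_%:R]mulr1; apply: sum_delta.
- by apply/ffunP => x; rewrite ffunE sum_delta.
- by rewrite sum_delta.
Qed.

Lemma subopt_le_convD K (de : 'I_K -> vecSA) (eps : 'I_K -> R) (dstar r : vecSA) p :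
  RD gamma P mu0 de eps r -> convD de eps p ->
  subopt r dstar <= norm1 [ffun x => p.1 x - dstar x] + p.2.
Proof.
move=> [r_rew r_eps] [lam [lam_ge0 lam1 -> ->]] /=.
set d := [ffun x => \sum_k lam k * de k x].
have d_eps : subopt r d <= \sum_k lam k * eps k.
  by rewrite subopt_convex //; apply: ler_sum => k _; apply: ler_wpM2l.
rewrite addrC (le_trans (subopt_le_norm1 r d dstar r_rew)) //.
by rewrite lerD2r.
Qed.

End Gap.

Theorem mainTheorem2 (R : realType) (S A : finType)
  (P : S -> S -> A -> R) (mu0 : S -> R) (gamma : R)
  (K : nat) (de : 'I_K -> {ffun S * A -> R}) (eps : 'I_K -> R) (dstar : {ffun S * A -> R}) :
  (forall s a s', 0 <= P s' s a) ->
  (forall s a, \sum_(s' : S) P s' s a = 1) ->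
  (forall s, 0 <= mu0 s) -> \sum_(s : S) mu0 s = 1 ->
  0 < gamma < 1 ->
  (0 < K)%N ->
  Phi gamma P mu0 dstar ->
  (forall k, Phi gamma P mu0 (de k)) ->
  (forall k, 0 <= eps k) ->
  RD gamma P mu0 de eps !=set0 ->
  Gap gamma P mu0 (RD gamma P mu0 de eps) dstar <=
    inf [set norm1 [ffun x => p.1 x - dstar x] + p.2 | p in convD de eps].
Proof.
move=> _ _ _ _ _ K_gt0 _ _ _ [r0 r0_RD].
apply: ge_sup; first by exists (subopt gamma P mu0 r0 dstar), r0.
move=> _ [r r_RD <-]; apply: lb_le_inf.
  pose k0 := Ordinal K_gt0.
  exists (norm1 [ffun x => de k0 x - dstar x] + eps k0).
  by exists (de k0, eps k0) => //; apply: convD_vertex.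
by move=> _ [p p_conv <-]; apply: subopt_le_convD r_RD p_conv.
Qed.
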